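(* Let $\Sigma$ be a subset of $\mathbb{R}^n$ that spans $\mathbb{R}^n$. Let $\|\cdot\|$ be a norm on $\mathbb{R}^n$ such that $\|f\|_\infty\le\|f\|^*$ for every $f\in\mathbb{R}^n$. Suppose there is a function $c$ such that for every $\epsilon>0$ and every $f$ with $\|f\|_\infty\le1$ and $\|f\|\ge\epsilon$ there exists $\sigma\in\Sigma$ with $|\langle f,\sigma\rangle|\ge c(\epsilon)>0$. Let $\theta>0$ and let $\eta:\mathbb{R}_+\to\mathbb{R}_+$ be decreasing. Then there exists a constant $C_0$, depending on $\eta$ and $\theta$ only, such that every $f\in\mathbb{R}^n$ with $\|f\|_2\le1$ has a decomposition $f=\sum_{i=1}^k\lambda_i\sigma_i+f_2+f_3$ in which each $\sigma_i\in\Sigma$ and there is a constant $C\le C_0$ with $\sum_{i=1}^k|\lambda_i|\le C$, $\|f_2\|\le\eta(C)$ and $\|f_3\|_1\le\theta$.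
   Context: Functions in $\mathbb{R}^n$ are functions on $\{1,\dots,n\}$ with $\langle f,g\rangle=\frac1n\sum_xf(x)g(x)$, $\|f\|_p=(\frac1n\sum_x|f(x)|^p)^{1/p}$, $\|f\|_\infty=\max_x|f(x)|$. The dual norm is $\|\phi\|^*=\max\{\langle f,\phi\rangle:\|f\|\le1\}$. *)

From HB Require Import structures.
From mathcomp Require Import all_boot all_order all_algebra.
From mathcomp Require Import all_classical all_reals.
Set Implicit Arguments. Unset Strict Implicit. Unset Printing Implicit Defensive.
Import Order.TTheory GRing.Theory Num.Theory.
Local Open Scope ring_scope.
Local Open Scope classical_set_scope.

(* Functions on {1,...,n} are row vectors 'rV[R]_n; f ord0 i is the value at i. *)

Definition ip (R : realType) (n : nat) (f g : 'rV[R]_n) : R :=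
  n%:R^-1 * \sum_(i < n) f ord0 i * g ord0 i.

Definition norm1 (R : realType) (n : nat) (f : 'rV[R]_n) : R :=
  n%:R^-1 * \sum_(i < n) `|f ord0 i|.

Definition norm2 (R : realType) (n : nat) (f : 'rV[R]_n) : R :=
  Num.sqrt (n%:R^-1 * \sum_(i < n) f ord0 i ^+ 2).

Definition norminf (R : realType) (n : nat) (f : 'rV[R]_n) : R :=
  \big[Num.max/0]_(i < n) `|f ord0 i|.

Definition is_norm (R : realType) (n : nat) (N : 'rV[R]_n -> R) : Prop :=
  (forall f, 0 <= N f) /\
  (forall f, N f = 0 -> f = 0) /\
  (forall (a : R) f, N (a *: f) = `|a| * N f) /\
  (forall f g, N (f + g) <= N f + N g).

Definition dual_norm (R : realType) (n : nat) (N : 'rV[R]_n -> R)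
  (phi : 'rV[R]_n) : R :=
  sup [set ip f phi | f in [set f : 'rV[R]_n | N f <= 1]].

Definition spans (R : realType) (n : nat) (Sigma : set 'rV[R]_n) : Prop :=
  forall f : 'rV[R]_n, exists (k : nat) (lam : 'I_k -> R) (s : 'I_k -> 'rV[R]_n),
    (forall i, Sigma (s i)) /\ f = \sum_(i < k) lam i *: s i.

From HB Require Import structures.
From mathcomp Require Import all_boot all_order all_algebra.
From mathcomp Require Import all_classical all_reals.
From mathcomp Require Import ring lra.
Set Implicit Arguments. Unset Strict Implicit. Unset Printing Implicit Defensive.
Import Order.TTheory GRing.Theory Num.Theory.
Local Open Scope ring_scope.
Local Open Scope classical_set_scope.

(* For C > 0 let p_C(g) be the infimum, over all decompositions
   g = sum_i lambda_i sigma_i + f2 + f3 with sigma_i in Sigma, of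
   sum_i |lambda_i| / C + ||f2|| / eta(C) + ||f3||_1 / theta.
   p_C is sublinear, and p_C(f) < 1 already gives the decomposition with constant C.
   Take thresholds C_0 < C_1 < ... depending only on c, theta and eta, and
   k > 2 / theta^2.  If p_(C_j)(f) >= 1 for every j < k, Hahn-Banach (here in
   finite dimension, via one-sided directional derivatives) gives functionals
   a_j <= p_(C_j) with a_j(f) >= 1.  Domination bounds the entries of a_j by
   1 / (n theta), its values on Sigma by 1 / C_j and its dual norm by 1 / eta(C_j);
   with the hypothesis on c and the growth of C_j this makes ||a_j|| small, so
   the a_j are almost orthogonal.  An almost orthogonal family of more than
   2 / theta^2 functionals cannot all correlate with f when ||f||_2 <= 1. *)

Section Sublinear.
Variables (R : realType) (V : lmodType R).

Record sublinear (q : V -> R) : Prop := Sublinear {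
  sublinZ : forall a v, 0 < a -> q (a *: v) = a * q v;
  sublinD : forall u v, q (u + v) <= q u + q v }.

(* For sublinear [q] this says that [q] is linear on the line spanned by [u]. *)
Definition linear_along (q : V -> R) u := q (- u) = - q u.

Variable q : V -> R.
Hypothesis q_sublin : sublinear q.

Lemma sublin0 : q 0 = 0.
Proof. by have := sublinZ q_sublin 0 (ltr0Sn R 1); rewrite scaler0; lra. Qed.

Lemma sublinZ_ge0 a v : 0 <= a -> q (a *: v) = a * q v.
Proof.
rewrite le_eqVlt => /orP[/eqP<-|]; last exact: sublinZ.
by rewrite scale0r mul0r sublin0.
Qed.

Lemma sublin_sum (I : Type) (r : seq I) (F : I -> V) :
  q (\sum_(i <- r) F i) <= \sum_(i <- r) q (F i).
Proof.
elim/big_ind2: _ => [|x1 x2 y1 y2 h1 h2|//]; first by rewrite sublin0.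
by apply: le_trans (sublinD q_sublin _ _) _; apply: lerD.
Qed.

Lemma linear_alongZ u t : linear_along q u -> q (t *: u) = t * q u.
Proof.
move=> qu; case: (ltrgt0P t) => [t0|t0|->]; first exact: sublinZ.
  rewrite -[t]opprK scaleNr -scalerN sublinZ ?oppr_gt0 // qu; ring.
by rewrite scale0r mul0r sublin0.
Qed.

End Sublinear.

Section DirectionalDerivative.
Variables (R : realType) (V : lmodType R) (q : V -> R).
Hypothesis q_sublin : sublinear q.

Definition diff_quot x v t := (q (x + t *: v) - q x) / t.

Let diff_quots x v := [set diff_quot x v t | t in [set t : R | 0 < t]].

(* The difference quotients increase with [t] and are bounded below, so their
   infimum is the one-sided directional derivative. *)
Definition dir_deriv x v := inf (diff_quots x v).

Lemma diff_quot_ge x v t : 0 < t -> - q (- v) <= diff_quot x v t.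
Proof.
move=> t_gt0; rewrite /diff_quot ler_pdivlMr //.
have := sublinD q_sublin (x + t *: v) (t *: - v).
by rewrite sublinZ // scalerN addrK; lra.
Qed.

Lemma diff_quot_homo x v s t : 0 < s -> s <= t -> diff_quot x v s <= diff_quot x v t.
Proof.
move=> s_gt0 st; have t_gt0 : 0 < t by apply: lt_le_trans st.
set u := s / t.
have u_gt0 : 0 < u by rewrite divr_gt0.
have u_ge0 := ltW u_gt0.
have u_le1 : u <= 1 by rewrite ler_pdivrMr // mul1r.
have ut : u * t = s by rewrite mulfVK ?gt_eqF.
have convex : x + s *: v = (1 - u) *: x + u *: (x + t *: v).
  by rewrite scalerDr scalerA ut scalerBl scale1r addrA subrK.
have := sublinD q_sublin ((1 - u) *: x) (u *: (x + t *: v)).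
rewrite -convex !(sublinZ_ge0 q_sublin) ?subr_ge0 // => hconv.
have : q (x + s *: v) - q x <= u * (q (x + t *: v) - q x) by lra.
rewrite /diff_quot -ut invfM mulrA ler_pM2r ?invr_gt0 // ler_pdivrMr //.
by rewrite ut mulrC.
Qed.

Lemma diff_quots_neq0 x v : diff_quots x v !=set0.
Proof. by exists (diff_quot x v 1), 1 => //=; apply: ltr01. Qed.

Lemma dir_deriv_le x v t : 0 < t -> dir_deriv x v <= diff_quot x v t.
Proof.
move=> t_gt0; apply: ge_inf; last by exists t.
by exists (- q (- v)) => _ [s s_gt0 <-]; apply: diff_quot_ge.
Qed.

Lemma dir_deriv_ge x v b :
  (forall t, 0 < t -> b <= diff_quot x v t) -> b <= dir_deriv x v.
Proof. by move=> h; apply: lb_le_inf (diff_quots_neq0 x v) _ => _ [s s_gt0 <-]; apply: h. Qed.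

Lemma dir_deriv_ge_opp x v : - q (- v) <= dir_deriv x v.
Proof. by apply: dir_deriv_ge => t; apply: diff_quot_ge. Qed.

Lemma dir_deriv_le_sublin x v : dir_deriv x v <= q v.
Proof.
apply: le_trans (dir_deriv_le x v ltr01) _.
by rewrite /diff_quot divr1 scale1r; have := sublinD q_sublin x v; lra.
Qed.

Lemma dir_derivZ_le x v a : 0 < a -> dir_deriv x (a *: v) <= a * dir_deriv x v.
Proof.
move=> a_gt0; rewrite -ler_pdivrMl //; apply: dir_deriv_ge => t t_gt0.
rewrite ler_pdivrMl //.
have -> : a * diff_quot x v t = diff_quot x (a *: v) (t / a).
  by rewrite /diff_quot scalerA mulfVK ?gt_eqF // invf_div mulrCA.
by apply: dir_deriv_le; apply: divr_gt0.
Qed.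

Lemma diff_quotD_le x u v r : 0 < r ->
  diff_quot x (u + v) r <= diff_quot x u (2 * r) + diff_quot x v (2 * r).
Proof.
move=> r_gt0; rewrite /diff_quot.
have half_gt0 : (0 : R) < 2^-1 by rewrite invr_gt0 ltr0Sn.
have midpoint : x + r *: (u + v) =
    2^-1 *: (x + (2 * r) *: u) + 2^-1 *: (x + (2 * r) *: v).
  have halves : (2^-1 + 2^-1 : R) = 1 by lra.
  by rewrite !scalerDr !scalerA mulrA mulVf ?pnatr_eq0 // mul1r addrACA -scalerDl halves scale1r.
have := sublinD q_sublin (2^-1 *: (x + (2 * r) *: u)) (2^-1 *: (x + (2 * r) *: v)).
rewrite -midpoint !sublinZ // => hmid.
rewrite -mulrDl invfM mulrA ler_pM2r ?invr_gt0 //.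
rewrite ler_pdivlMr ?ltr0Sn //; lra.
Qed.

Lemma dir_deriv_sublinear x : sublinear (dir_deriv x).
Proof.
split=> [a v a_gt0|u v].
  apply/eqP; rewrite eq_le dir_derivZ_le //=.
  have := @dir_derivZ_le x (a *: v) a^-1; rewrite scalerA mulVf ?gt_eqF // scale1r.
  by rewrite invr_gt0 => /(_ a_gt0); rewrite -(ler_pM2l a_gt0) mulrA divff ?gt_eqF // mul1r.
suff h s t : 0 < s -> 0 < t -> dir_deriv x (u + v) <= diff_quot x u s + diff_quot x v t.
  have h1 t : 0 < t -> dir_deriv x (u + v) - diff_quot x v t <= dir_deriv x u.
    by move=> t_gt0; apply: dir_deriv_ge => s s_gt0; have := h s t s_gt0 t_gt0; lra.
  have : dir_deriv x (u + v) - dir_deriv x u <= dir_deriv x v.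
    by apply: dir_deriv_ge => t t_gt0; have := h1 t t_gt0; lra.
  lra.
move=> s_gt0 t_gt0; set r := Num.min s t / 2.
have r_gt0 : 0 < r by rewrite divr_gt0 // lt_min s_gt0.
have r2_gt0 : 0 < 2 * r by rewrite mulr_gt0.
have [rs rt] : 2 * r <= s /\ 2 * r <= t.
  by rewrite /r mulrC mulfVK ?pnatr_eq0 // !ge_min !lexx ?orbT.
apply: le_trans (dir_deriv_le _ _ r_gt0) _; apply: le_trans (diff_quotD_le _ _ _ r_gt0) _.
by apply: lerD; apply: diff_quot_homo.
Qed.

Lemma dir_deriv_self x : dir_deriv x x = q x /\ linear_along (dir_deriv x) x.
Proof.
have dq_x : forall t, 0 < t -> diff_quot x x t = q x.
  move=> t t_gt0; have t1_gt0 : 0 < 1 + t by lra.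
  rewrite /diff_quot -{1}[x]scale1r -scalerDl sublinZ //.
  by field; rewrite gt_eqF.
have dx : dir_deriv x x = q x.
  apply/eqP; rewrite eq_le; apply/andP; split.
    by have := dir_deriv_le x x ltr01; rewrite dq_x // ltr01.
  by apply: dir_deriv_ge => t t_gt0; rewrite dq_x.
split => //; rewrite /linear_along dx; apply/eqP; rewrite eq_le; apply/andP; split.
  have half_gt0 : (0 : R) < 2^-1 by rewrite invr_gt0 ltr0Sn.
  apply: le_trans (dir_deriv_le x (- x) half_gt0) _.
  rewrite /diff_quot scalerN -{1}[x]scale1r -scalerBl (_ : 1 - 2^-1 = 2^-1); last by lra.
  by rewrite sublinZ // [X in X <= _](_ : _ = - q x) //; field.
by have := dir_deriv_ge_opp x (- x); rewrite opprK.
Qed.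

Lemma dir_deriv_linear_along x u :
  linear_along q u -> dir_deriv x u = q u /\ linear_along (dir_deriv x) u.
Proof.
rewrite /linear_along => qu.
have := sublinD (dir_deriv_sublinear x) u (- u).
rewrite subrr (sublin0 (dir_deriv_sublinear x)).
have := dir_deriv_le_sublin x u; have := dir_deriv_le_sublin x (- u).
by rewrite qu; lra.
Qed.

End DirectionalDerivative.

Section RowDot.
Variables (R : realType) (n : nat).

Definition dot (a g : 'rV[R]_n) := \sum_(i < n) a ord0 i * g ord0 i.

Lemma dotC a g : dot a g = dot g a.
Proof. by apply: eq_bigr => i _; rewrite mulrC. Qed.

Lemma dotNl a g : dot (- a) g = - dot a g.
Proof. by rewrite /dot -sumrN; apply: eq_bigr => i _; rewrite mxE mulNr. Qed.

Lemma dot_suml k (a : nat -> 'rV[R]_n) g :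
  dot (\sum_(j < k) a j) g = \sum_(j < k) dot (a j) g.
Proof.
rewrite /dot exchange_big /=; apply: eq_bigr => i _.
by rewrite summxE mulr_suml.
Qed.

Lemma dot_delta a (i : 'I_n) : dot a 'e_i = a ord0 i.
Proof.
rewrite /dot (bigD1 i) //= big1 ?addr0 => [|j ji]; first by rewrite mxE !eqxx mulr1.
by rewrite mxE (negbTE ji) andbF mulr0.
Qed.

Lemma dot_sqr_le u v a g : 2 * u * v * dot a g <= u ^+ 2 * dot g g + v ^+ 2 * dot a a.
Proof.
rewrite /dot !mulr_sumr -big_split /=; apply: ler_sum => i _.
have := sqr_ge0 (u * g ord0 i - v * a ord0 i); lra.
Qed.

End RowDot.

Section HahnBanach.
Variables (R : realType) (n : nat).

Lemma sublin_linear_along_delta (q : 'rV[R]_n -> R) : sublinear q ->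
  (forall i : 'I_n, linear_along q 'e_i) -> forall g, q g = dot g (\row_i q 'e_i).
Proof.
move=> q_sublin q_lin.
have le_dot h : q h <= dot h (\row_i q 'e_i).
  rewrite {1}(row_sum_delta h); apply: le_trans (sublin_sum q_sublin _ _) _.
  by apply: ler_sum => i _; rewrite linear_alongZ // mxE.
move=> g; have := le_dot g; have := le_dot (- g).
have := sublinD q_sublin g (- g); rewrite subrr sublin0 // dotNl.
lra.
Qed.

(* Differentiating in the direction ['e_i] preserves domination by [p], the
   value at [f] and the linearity gained so far, and adds linearity along ['e_i]. *)
Lemma sublin_linear_on_deltas (p : 'rV[R]_n -> R) f (s : seq 'I_n) : sublinear p ->
  exists q : 'rV[R]_n -> R,
    [/\ sublinear q, forall g, q g <= p g, q f = p f, linear_along q f &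
        forall i, i \in s -> linear_along q 'e_i].
Proof.
move=> p_sublin; elim: s => [|m s [q [q_sublin qp qf q_linf q_lin]]].
  have [pf p_linf] := dir_deriv_self p_sublin f.
  exists (dir_deriv p f); split => //; first exact: dir_deriv_sublinear.
  by move=> g; apply: dir_deriv_le_sublin.
have [qf' q_linf'] := dir_deriv_linear_along q_sublin 'e_m q_linf.
exists (dir_deriv q 'e_m); split => //.
- exact: dir_deriv_sublinear.
- by move=> g; apply: le_trans (dir_deriv_le_sublin _ _ g) (qp g).
- by rewrite qf'.
move=> i; rewrite inE => /orP[/eqP->|i_s].
  by have [] := dir_deriv_self q_sublin 'e_m.
by have [] := dir_deriv_linear_along q_sublin 'e_m (q_lin i i_s).
Qed.

Lemma hahn_banach (p : 'rV[R]_n -> R) f : sublinear p ->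
  exists a, (forall g, dot g a <= p g) /\ dot f a = p f.
Proof.
move=> p_sublin.
have [q [q_sublin qp qf _ q_lin]] := sublin_linear_on_deltas f (enum 'I_n) p_sublin.
have q_dot := sublin_linear_along_delta q_sublin (fun i => q_lin i (mem_enum _ i)).
by exists (\row_i q 'e_i); split=> [g|]; rewrite -q_dot.
Qed.

End HahnBanach.

Section Norms.
Variables (R : realType) (n : nat).
Implicit Types f g : 'rV[R]_n.

Lemma norm1_ge0 g : 0 <= norm1 g.
Proof. by rewrite /norm1 mulr_ge0 ?invr_ge0 // sumr_ge0. Qed.

Lemma norm1Z a g : norm1 (a *: g) = `|a| * norm1 g.
Proof.
rewrite /norm1 mulrCA; congr (_ * _); rewrite mulr_sumr.
by apply: eq_bigr => i _; rewrite mxE normrM.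
Qed.

Lemma norm10 : norm1 (0 : 'rV[R]_n) = 0.
Proof. by have := norm1Z 0 0; rewrite scale0r normr0 mul0r. Qed.

Lemma norm1D f g : norm1 (f + g) <= norm1 f + norm1 g.
Proof.
rewrite /norm1 -mulrDr ler_wpM2l ?invr_ge0 // -big_split /=.
by apply: ler_sum => i _; rewrite mxE ler_normD.
Qed.

Lemma norm1_delta (i : 'I_n) : norm1 ('e_i : 'rV[R]_n) = n%:R^-1.
Proof.
rewrite /norm1 (bigD1 i) //= big1 ?addr0 => [|j ji]; first by rewrite mxE !eqxx normr1 mulr1.
by rewrite mxE (negbTE ji) andbF normr0.
Qed.

Lemma norm2_le1 f : norm2 f <= 1 -> dot f f <= n%:R.
Proof.
case: (posnP n) => [n0 _|n_gt0].
  by rewrite /dot big1 // => -[i i_lt]; move: i_lt (i_lt); rewrite {1}n0.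
move=> norm2_le1; have : n%:R^-1 * dot f f <= 1.
  by rewrite -(ler_sqrt _ ler01) sqrtr1.
by rewrite ler_pdivrMl ?ltr0n // mulr1.
Qed.

Lemma is_norm0 (N : 'rV[R]_n -> R) : is_norm N -> N 0 = 0.
Proof. by case=> _ [_ [NZ _]]; have := NZ 0 0; rewrite scale0r normr0 mul0r. Qed.

End Norms.

Section DecompositionNorm.
Variables (R : realType) (n : nat) (Sigma : set 'rV[R]_n) (N : 'rV[R]_n -> R).
Hypothesis N_norm : is_norm N.
Variables (C eta theta : R).
Hypotheses (C_gt0 : 0 < C) (eta_gt0 : 0 < eta) (theta_gt0 : 0 < theta).

(* The first part of a decomposition is a list of pairs (lambda_i, sigma_i), so
   that decompositions add up by concatenation. *)
Definition combo (l : seq (R * 'rV[R]_n)) := \sum_(x <- l) x.1 *: x.2.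
Definition coef_mass (l : seq (R * 'rV[R]_n)) := \sum_(x <- l) `|x.1|.

Definition dec_cost l f2 (f3 : 'rV[R]_n) := coef_mass l / C + N f2 / eta + norm1 f3 / theta.

Definition dec_costs g : set R :=
  [set y | exists l f2 f3, [/\ forall x, x \in l -> Sigma x.2,
     g = combo l + f2 + f3 & y = dec_cost l f2 f3]].

Definition dec_norm g := inf (dec_costs g).

Lemma dec_cost_ge0 l f2 f3 : 0 <= dec_cost l f2 f3.
Proof.
have [N_ge0 _] := N_norm.
by rewrite !addr_ge0 ?divr_ge0 ?sumr_ge0 ?norm1_ge0 ?N_ge0 ?ltW.
Qed.

Lemma dec_costs_neq0 g : dec_costs g !=set0.
Proof.
by exists (dec_cost [::] 0 g), [::], 0, g; split; rewrite // /combo big_nil !add0r.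
Qed.

Lemma dec_norm_le_cost g y : dec_costs g y -> dec_norm g <= y.
Proof.
apply: ge_inf; exists 0 => _ [l [f2 [f3 [_ _ ->]]]]; exact: dec_cost_ge0.
Qed.

Lemma dec_norm_le l f2 f3 : (forall x, x \in l -> Sigma x.2) ->
  dec_norm (combo l + f2 + f3) <= dec_cost l f2 f3.
Proof. by move=> l_Sigma; apply: dec_norm_le_cost; exists l, f2, f3. Qed.

Lemma dec_norm_ge g b : (forall y, dec_costs g y -> b <= y) -> b <= dec_norm g.
Proof. exact: lb_le_inf (dec_costs_neq0 g). Qed.

Lemma dec_costsZ g y a : 0 < a -> dec_costs g y -> dec_costs (a *: g) (a * y).
Proof.
move=> a_gt0 [l [f2 [f3 [l_Sigma -> ->]]]].
have [_ [_ [NZ _]]] := N_norm.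
exists [seq (a * x.1, x.2) | x <- l], (a *: f2), (a *: f3); split.
- by move=> x /mapP [z zl ->]; apply: l_Sigma zl.
- rewrite /combo big_map !scalerDr scaler_sumr.
  by congr (_ + _ + _); apply: eq_bigr => x _; rewrite scalerA.
rewrite /dec_cost /coef_mass big_map NZ norm1Z (gtr0_norm a_gt0).
under [in RHS]eq_bigr do rewrite /= normrM (gtr0_norm a_gt0).
by rewrite -mulr_sumr; ring.
Qed.

Lemma dec_costsD g h y z : dec_costs g y -> dec_costs h z ->
  exists2 w, dec_costs (g + h) w & w <= y + z.
Proof.
move=> [l [f2 [f3 [l_Sigma -> ->]]]] [l' [f2' [f3' [l'_Sigma -> ->]]]].
have [_ [_ [_ ND]]] := N_norm.
exists (dec_cost (l ++ l') (f2 + f2') (f3 + f3')).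
  exists (l ++ l'), (f2 + f2'), (f3 + f3'); split => //.
    by move=> x; rewrite mem_cat => /orP[/l_Sigma|/l'_Sigma].
  by rewrite /combo big_cat /= addrACA; congr (_ + _); apply: addrACA.
have eta_inv_ge0 : 0 <= eta^-1 by rewrite invr_ge0 ltW.
have theta_inv_ge0 : 0 <= theta^-1 by rewrite invr_ge0 ltW.
rewrite /dec_cost /coef_mass big_cat /= mulrDl.
have := ler_wpM2r eta_inv_ge0 (ND f2 f2').
have := ler_wpM2r theta_inv_ge0 (norm1D f3 f3').
rewrite !mulrDl; lra.
Qed.

Lemma dec_norm_sublinear : sublinear dec_norm.
Proof.
have dec_normZ_le a g : 0 < a -> dec_norm (a *: g) <= a * dec_norm g.
  move=> a_gt0; rewrite -ler_pdivrMl //; apply: dec_norm_ge => y gy.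
  by rewrite ler_pdivrMl //; apply: dec_norm_le_cost; apply: dec_costsZ.
split=> [a v a_gt0|u v].
  apply/eqP; rewrite eq_le dec_normZ_le //=.
  have := dec_normZ_le a^-1 (a *: v); rewrite invr_gt0 scalerA mulVf ?gt_eqF // scale1r.
  by move=> /(_ a_gt0); rewrite -(ler_pM2l a_gt0) mulrA divff ?gt_eqF // mul1r.
have h1 z : dec_costs v z -> dec_norm (u + v) - z <= dec_norm u.
  move=> vz; apply: dec_norm_ge => y uy.
  have [w uvw wle] := dec_costsD uy vz.
  by have := dec_norm_le_cost uvw; lra.
have : dec_norm (u + v) - dec_norm u <= dec_norm v.
  by apply: dec_norm_ge => z vz; have := h1 z vz; lra.
lra.
Qed.

Lemma dec_norm_lt1_decomposition f : dec_norm f < 1 ->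
  exists k (lam : 'I_k -> R) (s : 'I_k -> 'rV[R]_n) f2 f3,
    [/\ forall i, Sigma (s i), f = \sum_(i < k) lam i *: s i + f2 + f3,
        \sum_(i < k) `|lam i| <= C, N f2 <= eta & norm1 f3 <= theta].
Proof.
move=> /(inf_lt (dec_costs_neq0 f)) [_ [l [f2 [f3 [l_Sigma -> ->]]]]].
have [N_ge0 _] := N_norm.
have mass_ge0 : 0 <= coef_mass l / C by rewrite divr_ge0 ?sumr_ge0 ?ltW.
have f2_ge0 : 0 <= N f2 / eta by rewrite divr_ge0 ?N_ge0 ?ltW.
have f3_ge0 : 0 <= norm1 f3 / theta by rewrite divr_ge0 ?norm1_ge0 ?ltW.
have le_of_div_lt1 (x y : R) : 0 < y -> x / y < 1 -> x <= y.
  by move=> y_gt0; rewrite ltr_pdivrMr // mul1r => /ltW.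
rewrite /dec_cost /coef_mass (big_nth (0, 0)) big_mkord in mass_ge0 * => cost_lt1.
exists (size l), (fun i => (nth (0, 0) l i).1), (fun i => (nth (0, 0) l i).2), f2, f3.
split.
- by move=> i; apply/l_Sigma/mem_nth.
- by rewrite /combo (big_nth (0, 0)) big_mkord.
- by apply: le_of_div_lt1 => //; lra.
- by apply: le_of_div_lt1 => //; lra.
- by apply: le_of_div_lt1 => //; lra.
Qed.

Section Dominated.
Variable a : 'rV[R]_n.
Hypothesis a_le : forall g, dot g a <= dec_norm g.

Lemma dot_le_abs_bound g b : dot g a <= b -> dot (- g) a <= b -> `|dot g a| <= b.
Proof. by rewrite dotNl ler_norml => ? ?; apply/andP; split; lra. Qed.

Lemma dominated_Sigma s : Sigma s -> `|dot s a| <= C^-1.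
Proof.
move=> Sigma_s; have one_pt (lam : R) : `|lam| = 1 -> dot (lam *: s) a <= C^-1.
  move=> lam1; apply: le_trans (a_le _) _.
  have := @dec_norm_le [:: (lam, s)] 0 0; rewrite /combo big_seq1 !addr0.
  rewrite /dec_cost /coef_mass big_seq1 lam1 is_norm0 // norm10 !mul0r !addr0 mul1r.
  by apply; move=> x; rewrite inE => /eqP->.
apply: dot_le_abs_bound.
  by have := one_pt 1 (normr1 R); rewrite scale1r.
by have := one_pt (-1) (normrN1 R); rewrite scaleN1r.
Qed.

Lemma dominated_le_norm g : dot g a <= N g / eta.
Proof.
apply: le_trans (a_le _) _; have := @dec_norm_le [::] g 0.
rewrite /combo big_nil add0r addr0 /dec_cost /coef_mass big_nil mul0r add0r norm10 mul0r addr0.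
exact.
Qed.

Lemma dominated_entry (i : 'I_n) : `|a ord0 i| <= n%:R^-1 / theta.
Proof.
have le_norm1 g : dot g a <= norm1 g / theta.
  apply: le_trans (a_le _) _; have := @dec_norm_le [::] 0 g.
  rewrite /combo big_nil !add0r /dec_cost /coef_mass big_nil mul0r add0r is_norm0 // mul0r add0r.
  exact.
rewrite -dot_delta dotC; apply: dot_le_abs_bound; apply: le_trans (le_norm1 _) _.
  by rewrite norm1_delta.
by rewrite -scaleN1r norm1Z normrN1 mul1r norm1_delta.
Qed.

End Dominated.

End DecompositionNorm.

Lemma almost_orthogonal_bound (R : realType) (n k : nat) (T : R)
    (a : nat -> 'rV[R]_n) (f : 'rV[R]_n) :
  (0 < k)%N -> dot f f <= n%:R ->
  (forall j, (j < k)%N -> 1 <= dot f (a j)) ->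
  (forall i j, (i < k)%N -> (j < k)%N ->
     n%:R * dot (a i) (a j) <= 2^-1 + (i == j)%:R * T) ->
  k%:R <= 2 * T.
Proof.
move=> k_gt0 f_le a_f a_gram.
set S := \sum_(j < k) a j; set K : R := k%:R; set M : R := n%:R.
have K_gt0 : 0 < K by rewrite ltr0n.
have M_gt0 : 0 < M.
  rewrite ltr0n lt0n; apply/negP => /eqP n0; have := a_f 0%N k_gt0.
  by rewrite /dot big1 ?ler10 // => -[i i_lt]; move: i_lt (i_lt); rewrite {1}n0.
have S_f : K <= dot S f.
  have -> : K = \sum_(j < k) 1 by rewrite sumr_const card_ord.
  by rewrite dot_suml; apply: ler_sum => j _; rewrite dotC; exact: a_f (ltn_ord j).
have S_S : M * dot S S <= K * (K / 2 + T).
  rewrite {1}/S dot_suml mulr_sumr; under eq_bigr do rewrite dotC /S dot_suml mulr_sumr.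
  apply: le_trans (_ : \sum_(i < k) \sum_(j < k) (2^-1 + ((j : nat) == i)%:R * T) <= _).
    by do 2!apply: ler_sum => ? _; apply: a_gram.
  have delta_sum (i : 'I_k) : \sum_(j < k) ((j : nat) == i)%:R * T = T.
    rewrite (bigD1 i) //= eqxx mul1r big1 ?addr0 // => l /negbTE li.
    by rewrite val_eqE li mul0r.
  have row_sum (i : 'I_k) : \sum_(j < k) (2^-1 + ((j : nat) == i)%:R * T) = K / 2 + T.
    by rewrite big_split /= delta_sum sumr_const card_ord -(mulr_natl 2^-1).
  by rewrite (eq_bigr _ (fun i _ => row_sum i)) sumr_const card_ord -(mulr_natl (K / 2 + T)).
(* AM-GM with weights K and M turns the bounds on <S, f> and <S, S> into K M (K - 2 T) <= 0. *)
have am_gm := dot_sqr_le K M S f.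
have f_term : K ^+ 2 * dot f f <= K ^+ 2 * M by rewrite ler_pM2l ?exprn_gt0.
have KM2_gt0 : 0 < 2 * K * M by rewrite !mulr_gt0.
have S_f_term : 2 * K * M * K <= 2 * K * M * dot S f by rewrite ler_pM2l.
have S_S_term : M ^+ 2 * dot S S <= M * (K * (K / 2 + T)).
  by rewrite expr2 -mulrA ler_pM2l.
have : 0 <= K * M * (2 * T - K) by lra.
by rewrite pmulr_rge0 ?mulr_gt0 // subr_ge0.
Qed.

Section Thresholds.
Variables (R : realType) (c : R -> R) (theta : R) (eta : R -> R).

(* The increment forces [theta / Cseq j.+1 < c (theta * eta (Cseq j) / 2)]
   (see [Cseq_step]); the absolute value only keeps the sequence increasing. *)
Fixpoint Cseq j : R :=
  if j is j'.+1 then Cseq j' + 1 + `|theta / c (theta * eta (Cseq j') / 2)| else 1.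

Lemma Cseq_ge1 j : 1 <= Cseq j.
Proof. by elim: j => //= j IHj; have := normr_ge0 (theta / c (theta * eta (Cseq j) / 2)); lra. Qed.

Lemma Cseq_gt0 j : 0 < Cseq j.
Proof. exact: lt_le_trans ltr01 (Cseq_ge1 j). Qed.

Lemma le_Cseq i j : (i <= j)%N -> Cseq i <= Cseq j.
Proof.
elim: j => [|j IHj]; first by rewrite leqn0 => /eqP->.
rewrite leq_eqVlt ltnS => /orP[/eqP->//|/IHj ij] /=.
by have := normr_ge0 (theta / c (theta * eta (Cseq j) / 2)); lra.
Qed.

Lemma Cseq_step j : 0 < c (theta * eta (Cseq j) / 2) ->
  theta / Cseq j.+1 < c (theta * eta (Cseq j) / 2).
Proof.
set e := c _ => e_gt0.
have C_large : theta / e < Cseq j.+1.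
  by have := ler_norm (theta / e); have := Cseq_ge1 j; rewrite /= -/e; lra.
by rewrite ltr_pdivrMr ?Cseq_gt0 // mulrC -ltr_pdivrMr.
Qed.

End Thresholds.

Section DominatedFamily.
Variables (R : realType) (c : R -> R) (theta : R) (eta : R -> R).
Hypothesis theta_gt0 : 0 < theta.
Hypothesis eta_gt0 : forall x, 0 <= x -> 0 < eta x.
Hypothesis eta_anti : forall x y, 0 <= x -> x <= y -> eta y <= eta x.
Variables (n : nat) (Sigma : set 'rV[R]_n) (N : 'rV[R]_n -> R).
Hypothesis N_norm : is_norm N.
Hypothesis c_detects : forall eps, 0 < eps -> 0 < c eps /\
  forall f, norminf f <= 1 -> eps <= N f -> exists2 s, Sigma s & c eps <= `|ip f s|.

Let C j := Cseq c theta eta j.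
Let level j := dec_norm Sigma N (C j) (eta (C j)) theta.

Let eta_C_gt0 j : 0 < eta (C j).
Proof. exact/eta_gt0/ltW/Cseq_gt0. Qed.

(* Rescaled to sup-norm 1, a functional dominated at level [j + 1] pairs with
   every element of Sigma below [c] at the threshold [theta * eta (C j) / 2],
   so by the hypothesis on [c] its norm stays below that threshold. *)
Lemma dominated_norm_small j a : (forall g, dot g a <= level j.+1 g) ->
  n%:R * N a < eta (C j) / 2.
Proof.
move=> a_dom; case: (posnP n) => [->|n_gt0]; first by rewrite mul0r divr_gt0.
have [_ [_ [NZ _]]] := N_norm.
set e := theta * eta (C j) / 2.
have e_gt0 : 0 < e by rewrite divr_gt0 // mulr_gt0.
have [ce_gt0 detect] := c_detects e_gt0.
have nth_gt0 : 0 < n%:R * theta by rewrite mulr_gt0 // ltr0n.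
set b := (n%:R * theta) *: a.
have b_le1 : norminf b <= 1.
  apply: bigmax_le => // i _; rewrite mxE normrM gtr0_norm //.
  apply: le_trans (ler_wpM2l (ltW nth_gt0) (dominated_entry N_norm (Cseq_gt0 _ _ _ _)
     (eta_C_gt0 _) theta_gt0 a_dom i)) _.
  rewrite [X in X <= _](_ : _ = 1) //.
  by field; rewrite pnatr_eq0 -lt0n n_gt0 gt_eqF.
rewrite ltNge; apply/negP => Na_large.
have : e <= N b.
  have -> : N b = theta * (n%:R * N a) by rewrite NZ gtr0_norm //; ring.
  by rewrite /e -mulrA ler_pM2l.
move=> /(detect b b_le1) [s Sigma_s].
have -> : ip b s = theta * dot s a.
  rewrite /ip /dot !mulr_sumr; apply: eq_bigr => i _; rewrite mxE.
  by field; rewrite pnatr_eq0 -lt0n n_gt0.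
have := @Cseq_step _ c theta eta j ce_gt0; rewrite -/(C j.+1) normrM gtr0_norm //.
have := dominated_Sigma N_norm (Cseq_gt0 _ _ _ _) (eta_C_gt0 _) theta_gt0 a_dom Sigma_s.
rewrite -(ler_pM2l theta_gt0); lra.
Qed.

Lemma dominated_dot_small i j a b : (i <= j)%N ->
  (forall g, dot g a <= level i g) -> (forall g, dot g b <= level j.+1 g) ->
  n%:R * dot a b <= 2^-1.
Proof.
move=> ij a_dom b_dom.
have b_small := dominated_norm_small b_dom.
have eta_ji : eta (C j) <= eta (C i) by apply/eta_anti/le_Cseq/ij/ltW/Cseq_gt0.
have Nb_ge0 : 0 <= n%:R * N b by rewrite mulr_ge0 // N_norm.1.
rewrite dotC; apply: le_trans (_ : n%:R * (N b / eta (C i)) <= _).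
  apply: ler_wpM2l => //.
  exact: (dominated_le_norm N_norm (Cseq_gt0 _ _ _ _) (eta_C_gt0 _) theta_gt0 a_dom).
rewrite mulrA ler_pdivrMr // mulrC; lra.
Qed.

Lemma dominated_dot_self j a : (forall g, dot g a <= level j g) ->
  n%:R * dot a a <= theta ^- 2.
Proof.
move=> a_dom; case: (posnP n) => [n0|n_gt0].
  by rewrite [X in X%:R]n0 mul0r invr_ge0 exprn_ge0 // ltW.
have entry := dominated_entry N_norm (Cseq_gt0 _ _ _ _) (eta_C_gt0 _) theta_gt0 a_dom.
apply: le_trans (_ : n%:R * \sum_(i < n) (n%:R^-1 / theta) ^+ 2 <= _).
  apply: ler_wpM2l => //; apply: ler_sum => i _.
  by apply: le_trans (ler_norm _) _; rewrite normrM expr2; apply: ler_pM.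
rewrite sumr_const card_ord -mulr_natl [X in X <= _](_ : _ = theta ^- 2) //.
by field; rewrite pnatr_eq0 -lt0n n_gt0 gt_eqF.
Qed.

Lemma dominated_family_gram k (a : nat -> 'rV[R]_n) :
  (forall j, (j < k)%N -> forall g, dot g (a j) <= level j g) ->
  forall i j, (i < k)%N -> (j < k)%N ->
    n%:R * dot (a i) (a j) <= 2^-1 + (i == j)%:R * theta ^- 2.
Proof.
move=> a_dom i j ik jk; case: (ltngtP i j) => [ij|ji|<-].
- rewrite mul0r addr0; case: j ij jk => // j; rewrite ltnS => ij jk.
  exact: dominated_dot_small ij (a_dom i ik) (a_dom j.+1 jk).
- rewrite mul0r addr0 dotC; case: i ji ik => // i; rewrite ltnS => ji ik.
  exact: dominated_dot_small ji (a_dom j jk) (a_dom i.+1 ik).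
rewrite mul1r; have := dominated_dot_self (a_dom i ik); lra.
Qed.

End DominatedFamily.

Theorem theorem3p8 (R : realType) (c : R -> R) (theta : R) (eta : R -> R) :
  0 < theta ->
  (forall x, 0 <= x -> 0 < eta x) ->
  (forall x y, 0 <= x -> x <= y -> eta y <= eta x) ->
  exists C0 : R,
  forall (n : nat) (Sigma : set 'rV[R]_n) (N : 'rV[R]_n -> R),
    spans Sigma ->
    is_norm N ->
    (forall f : 'rV[R]_n, norminf f <= dual_norm N f) ->
    (forall eps : R, 0 < eps ->
       0 < c eps /\
       forall f : 'rV[R]_n, norminf f <= 1 -> eps <= N f ->
         exists2 s, Sigma s & c eps <= `|ip f s|) ->
    forall f : 'rV[R]_n, norm2 f <= 1 ->
      exists (k : nat) (lam : 'I_k -> R) (s : 'I_k -> 'rV[R]_n)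
             (f2 f3 : 'rV[R]_n) (C : R),
        (forall i, Sigma (s i)) /\
        f = \sum_(i < k) lam i *: s i + f2 + f3 /\
        C <= C0 /\
        \sum_(i < k) `|lam i| <= C /\
        N f2 <= eta C /\
        norm1 f3 <= theta.
Proof.
move=> theta_gt0 eta_gt0 eta_anti.
pose C := Cseq c theta eta.
have bound_ge0 : 0 <= 2 * theta ^- 2 by rewrite mulr_ge0 // invr_ge0 exprn_ge0 // ltW.
have [k k_large] : exists k : nat, 2 * theta ^- 2 < k%:R.
  by exists (Num.Def.archi_bound (2 * theta ^- 2)); apply: archi_boundP.
exists (C k) => n Sigma N _ N_norm _ c_detects f f_le1.
pose level j := dec_norm Sigma N (C j) (eta (C j)) theta.
have eta_C_gt0 j : 0 < eta (C j) by apply/eta_gt0/ltW/Cseq_gt0.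
case: (pselect (exists2 j, (j < k)%N & level j f < 1)) => [[j jk f_lt1]|f_ge1].
  have [m [lam [s [f2 [f3 [Sigma_s -> mass f2_small f3_small]]]]]] :=
    dec_norm_lt1_decomposition N_norm (Cseq_gt0 _ _ _ _) (eta_C_gt0 j) theta_gt0 f_lt1.
  by exists m, lam, s, f2, f3, (C j); do !split => //; apply/le_Cseq/ltnW.
have [a a_dom] := choice (fun j => hahn_banach f
  (dec_norm_sublinear Sigma N_norm (Cseq_gt0 c theta eta j) (eta_C_gt0 j) theta_gt0)).
have a_f j : (j < k)%N -> 1 <= dot f (a j).
  by move=> jk; rewrite (a_dom j).2 leNgt; apply/negP => f_lt1; apply: f_ge1; exists j.
have k_gt0 : (0 < k)%N by rewrite -(ltr0n R); apply: le_lt_trans k_large.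
have := almost_orthogonal_bound k_gt0 (norm2_le1 f_le1) a_f
  (dominated_family_gram theta_gt0 eta_gt0 eta_anti N_norm c_detects (fun j _ => (a_dom j).1)).
lra.
Qed.
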